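(* Consider the algebra of Laurent polynomials in nonzero variables $a,b,c,d,e,f,g,h$ with the log-canonical Poisson bracket determined by $\{a,b\}=\tfrac12 ab,\ \{a,c\}=0,\ \{a,d\}=-\tfrac14 ad,\ \{a,e\}=\tfrac14 ae,\ \{a,f\}=\tfrac14 af,\ \{a,g\}=-\tfrac14 ag,\ \{a,h\}=\tfrac14 ah,$ $\{b,c\}=0,\ \{b,d\}=-\tfrac14 bd,\ \{b,e\}=\tfrac14 be,\ \{b,f\}=-\tfrac14 bf,\ \{b,g\}=-\tfrac14 bg,\ \{b,h\}=\tfrac14 bh,$ $\{c,d\}=-\tfrac12 cd,\ \{c,e\}=\tfrac12 ce,\ \{c,f\}=\{c,g\}=\{c,h\}=0,$ $\{d,e\}=0,\ \{d,f\}=\tfrac14 df,\ \{d,g\}=\{d,h\}=0,$ $\{e,f\}=-\tfrac14 ef,\ \{e,g\}=\{e,h\}=0,\ \{f,g\}=\tfrac14 fg,\ \{f,h\}=-\tfrac14 fh,\ \{h,g\}=0$. Then $de$ and $hg$ are Casimir elements and the symplectic leaves are $6$-dimensional.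
   Context: A log-canonical bracket is extended from the generators to all Laurent polynomials by bilinearity, antisymmetry and the Leibniz rule. (These are the $\lambda$-lengths of a complete system of arcs on a Riemann sphere with two holes, each with two bordered cusps — the $PIII^{D_6}$ case.) *)

From mathcomp Require Import all_boot all_algebra.
From mathcomp Require Import mpoly.
Set Implicit Arguments. Unset Strict Implicit. Unset Printing Implicit Defensive.
Import GRing.Theory Num.Theory.
Local Open Scope ring_scope.

(* Variables a,b,c,d,e,f,g,h are indexed 0,1,2,3,4,5,6,7. *)

(* 4 * w_ij for i < j, where {x_i, x_j} = w_ij x_i x_j. *)
Definition w4up (i j : nat) : int :=
  match i, j with
  | 0, 1 => 2
  | 0, 3 => -1
  | 0, 4 => 1
  | 0, 5 => 1
  | 0, 6 => -1
  | 0, 7 => 1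
  | 1, 3 => -1
  | 1, 4 => 1
  | 1, 5 => -1
  | 1, 6 => -1
  | 1, 7 => 1
  | 2, 3 => -2
  | 2, 4 => 2
  | 3, 5 => 1
  | 4, 5 => -1
  | 5, 6 => 1
  | 5, 7 => -1
  | _, _ => 0
  end.

Definition wcoef (R : numFieldType) (i j : 'I_8) : R :=
  (if (i < j)%N then (w4up i j)%:~R
   else if (j < i)%N then - (w4up j i)%:~R else 0) / 4%:R.

(* A Laurent polynomial  num * x^(-den)  in x_0..x_7. *)
Record laurent (R : numFieldType) := Laurent {
  lnum : {mpoly R[8]};
  lden : 'I_8 -> nat }.

Definition lgen (R : numFieldType) (i : 'I_8) : laurent R :=
  Laurent ('X_i : {mpoly R[8]}) (fun _ => 0%N).

(* x_i d/dx_i applied to num * x^(-den), divided by x^(-den) *)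
Definition leuler (R : numFieldType) (i : 'I_8) (F : laurent R) : {mpoly R[8]} :=
  'X_i * (lnum F)^`M(i) - (lden F i)%:R *: lnum F.

(* The log-canonical bracket extended to Laurent polynomials by bilinearity,
   antisymmetry and Leibniz:
   {F,G} = sum_{i,j} w_ij x_i x_j (dF/dx_i) (dG/dx_j). *)
Definition lbracket (R : numFieldType) (F G : laurent R) : laurent R :=
  Laurent (\sum_(i < 8) \sum_(j < 8) wcoef R i j *: (leuler i F * leuler j G))
          (fun k => (lden F k + lden G k)%N).

Definition lzero (R : numFieldType) (F : laurent R) : Prop := lnum F = 0.

Definition lmul (R : numFieldType) (F G : laurent R) : laurent R :=
  Laurent (lnum F * lnum G) (fun k => (lden F k + lden G k)%N).

Definition casimir (R : numFieldType) (F : laurent R) : Prop :=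
  forall G : laurent R, lzero (lbracket F G).

Definition leval (R : numFieldType) (x : 'I_8 -> R) (F : laurent R) : R :=
  (lnum F).@[x] / \prod_(k < 8) x k ^+ lden F k.

Definition poisson_tensor (R : numFieldType) (x : 'I_8 -> R) : 'M[R]_8 :=
  \matrix_(i < 8, j < 8) leval x (lbracket (lgen R i) (lgen R j)).

(* dimension of the symplectic leaf through x = rank of the Poisson tensor at x *)
Definition leaf_dim (R : numFieldType) (x : 'I_8 -> R) : nat :=
  \rank (poisson_tensor x).

From mathcomp Require Import all_boot all_algebra mpoly ring zify.
Set Implicit Arguments. Unset Strict Implicit. Unset Printing Implicit Defensive.
Import GRing.Theory Num.Theory.
Local Open Scope ring_scope.

(** The Euler operators [x_i d/dx_i] act diagonally on monomials, so the
    bracket of a monomial [x^m] with any [G] is [sum_(i,j) m_i w_ij x^m x_j dG/dx_j];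
    hence [x^m] is a Casimir as soon as [m^T W = 0], which holds for the
    exponent vectors of [de] and [hg].  At a point [x] of the torus the Poisson
    tensor is [D W D] with [D = diag x] invertible, so the leaf dimension is the
    rank of the constant matrix [W]: the two Casimir exponent vectors bound it
    by [8 - 2], and a nonsingular [6 x 6] minor of [W] bounds it from below. *)

Lemma mxrank_diag_conj (F : fieldType) n (d : 'rV[F]_n) (A : 'M[F]_n) :
  (forall i, d 0 i != 0) -> \rank (diag_mx d *m A *m diag_mx d) = \rank A.
Proof.
move=> d_nz; have d_unit : diag_mx d \in unitmx.
  by rewrite unitmxE det_diag unitfE; apply/prodf_neq0 => i _.
by rewrite mxrankMfree ?row_free_unit // eqmxMfull ?row_full_unit.
Qed.

Lemma mxrank_colsub_le (F : fieldType) m n k (g : 'I_k -> 'I_n) (A : 'M[F]_(m, n)) :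
  (\rank (colsub g A) <= \rank A)%N.
Proof.
have -> : colsub g A = A *m colsub g 1%:M by rewrite mulmx_colsub mulmx1.
exact: mxrankM_maxl.
Qed.

Lemma mxrank_ge_left_inverse (F : fieldType) m n (L : 'M[F]_(n, m)) (A : 'M[F]_(m, n)) :
  L *m A = 1%:M -> (n <= \rank A)%N.
Proof. by move=> LA; rewrite -[n in (n <= _)%N](mxrank1 F n) -LA mxrankM_maxr. Qed.

Lemma mxrank_le_left_kernel (F : fieldType) m n k
    (A : 'M[F]_(m, n)) (K : 'M[F]_(k, m)) (S : 'M[F]_(m, k)) :
  K *m A = 0 -> K *m S = 1%:M -> (\rank A <= m - k)%N.
Proof.
move=> KA KS; have rkK : (k <= \rank K)%N.
  by rewrite -[k in (k <= _)%N](mxrank1 F k) -KS mxrankM_maxl.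
have : (\rank K <= \rank (kermx A))%N by apply/mxrankS/sub_kermxP.
rewrite mxrank_ker; have := rank_leq_row A; lia.
Qed.

Section LogCanonicalBracket.
Variable R : numFieldType.

Lemma sum_mul_eq_nat (i : 'I_8) (f : 'I_8 -> R) : \sum_k f k * (i == k)%:R = f i.
Proof.
rewrite (bigD1 i) //= eqxx mulr1 big1 ?addr0 // => k ki.
by rewrite eq_sym (negbTE ki) mulr0.
Qed.

Lemma mderivXX (i j : 'I_8) : ('X_i : {mpoly R[8]})^`M(j) = (i == j)%:R.
Proof.
rewrite mderivX mnm1E; case: eqVneq => [->|_]; last by rewrite scale0r.
have -> : (U_(j) - U_(j) = 0)%MM by apply/mnmP => k; rewrite mnmBE mnm0E subnn.
by rewrite scale1r mpolyX0.
Qed.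

Lemma leuler_lgen (i k : 'I_8) : leuler k (lgen R i) = (i == k)%:R *: 'X_i.
Proof.
rewrite /leuler /= mderivXX scale0r subr0.
by case: eqVneq => [->|_]; rewrite ?mulr1 ?mulr0 ?scale1r ?scale0r.
Qed.

Lemma leuler_lmul_lgen (i j k : 'I_8) :
  leuler k (lmul (lgen R i) (lgen R j)) = ((i == k)%:R + (j == k)%:R) *: ('X_i * 'X_j).
Proof.
rewrite /leuler /= mderivM !mderivXX scale0r subr0.
rewrite scalerDl !scaler_nat mulr_natl mulr_natr.
by case: (eqVneq i k) => [<-|_]; case: (eqVneq j _) => [<-|_]; rewrite /=; ring.
Qed.

Lemma lbracket_lgen (i j : 'I_8) :
  lnum (lbracket (lgen R i) (lgen R j)) = wcoef R i j *: ('X_i * 'X_j).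
Proof.
rewrite /= (bigD1 i) //= (bigD1 j) //= !leuler_lgen !eqxx !scale1r.
rewrite big1 ?addr0 => [|l lj]; last first.
  by rewrite !leuler_lgen eq_sym (negbTE lj) scale0r mulr0 scaler0.
rewrite big1 ?addr0 // => k ki; apply: big1 => l _.
by rewrite !leuler_lgen eq_sym (negbTE ki) scale0r mul0r scaler0.
Qed.

Lemma casimir_lmul_lgen (i j : 'I_8) :
  (forall l, wcoef R i l + wcoef R j l = 0) -> casimir (lmul (lgen R i) (lgen R j)).
Proof.
move=> wij0 G; rewrite /lzero /=.
under eq_bigr => k _ do under eq_bigr => l _ do
  rewrite leuler_lmul_lgen -scalerAl scalerA.
rewrite exchange_big /=; apply: big1 => l _.
rewrite -scaler_suml; under eq_bigr => k _ do rewrite mulrDr.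
by rewrite big_split /= !sum_mul_eq_nat wij0 scale0r.
Qed.

Definition wmx : 'M[R]_8 := \matrix_(i, j) wcoef R i j.

Lemma poisson_tensorE (x : 'I_8 -> R) :
  poisson_tensor x = diag_mx (\row_i x i) *m wmx *m diag_mx (\row_i x i).
Proof.
apply/matrixP => i j; rewrite mul_mx_diag mul_diag_mx !mxE.
rewrite /leval lbracket_lgen mevalZ mevalM !mevalXU /=.
by rewrite big1 ?divr1 => [|k _]; [ring | rewrite expr0].
Qed.

Lemma leaf_dimE (x : 'I_8 -> R) : (forall i, x i != 0) -> leaf_dim x = \rank wmx.
Proof.
by move=> x_nz; rewrite /leaf_dim poisson_tensorE mxrank_diag_conj // => i; rewrite mxE.
Qed.

Lemma wcoef_de (l : 'I_8) : wcoef R (inord 3) l + wcoef R (inord 4) l = 0.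
Proof.
rewrite /wcoef !inordK //.
by case: l => [[|[|[|[|[|[|[|[|//]]]]]]]] ?] /=; field.
Qed.

Lemma wcoef_hg (l : 'I_8) : wcoef R (inord 7) l + wcoef R (inord 6) l = 0.
Proof.
rewrite /wcoef !inordK //.
by case: l => [[|[|[|[|[|[|[|[|//]]]]]]]] ?] /=; field.
Qed.

Definition casimir_exps : 'M[R]_(1 + 1, 8) :=
  col_mx (delta_mx 0 (inord 3) + delta_mx 0 (inord 4))
         (delta_mx 0 (inord 7) + delta_mx 0 (inord 6)).

Lemma casimir_exps_wmx : casimir_exps *m wmx = 0.
Proof.
rewrite mul_col_mx !mulmxDl -!rowE -col_mx0.
by congr col_mx; apply/rowP => l; rewrite !mxE ?wcoef_de ?wcoef_hg.
Qed.

Definition casimir_exps_section : 'M[R]_(8, 1 + 1) :=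
  row_mx (delta_mx (inord 3) 0) (delta_mx (inord 7) 0).

Lemma casimir_exps_sectionK : casimir_exps *m casimir_exps_section = 1%:M.
Proof.
rewrite mul_col_row !mulmxDl !mul_delta_mx_cond.
have inord_eq (m n : nat) : (m < 8)%N -> (n < 8)%N -> (inord m == inord n :> 'I_8) = (m == n).
  by move=> ? ?; rewrite -val_eqE /= !inordK.
rewrite !inord_eq //= !mulr0n !mulr1n ?addr0 ?add0r scalar_mx_block.
by congr block_mx; rewrite [LHS]mx11_scalar mxE.
Qed.

Definition minor_cols (c : 'I_6) : 'I_8 := inord (nth 0%N [:: 0; 1; 2; 3; 5; 6]%N c).

Definition minor_inv : 'M[R]_(6, 8) := \matrix_(r, k) nth 0 (nth [::]
  [:: [:: 0; -1; 1; 0; 0; -1; 1; 0];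
      [:: 1; 0; -1; 0; 0; 1; 1; 0];
      [:: -1; 1; 0; 2; 0; 0; 0; 0];
      [:: 0; 0; -2; 0; 0; 0; 0; 0];
      [:: 1; -1; 0; 0; 0; 0; -2; 0];
      [:: -1; -1; 0; 0; 0; 2; 0; 0]] r) k.

Lemma minor_invK : minor_inv *m colsub minor_cols wmx = 1%:M.
Proof.
apply/matrixP => r c; rewrite !mxE !big_ord_recl big_ord0 !mxE /wcoef.
have -> : nat_of_ord (minor_cols c) = nth 0%N [:: 0; 1; 2; 3; 5; 6]%N c.
  by case: c => [[|[|[|[|[|[|//]]]]]] ?]; rewrite /minor_cols inordK.
by case: r => [[|[|[|[|[|[|//]]]]]] ?]; case: c => [[|[|[|[|[|[|//]]]]]] ?];
   rewrite /=; field.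
Qed.

Lemma rank_wmx : \rank wmx = 6%N.
Proof.
apply/eqP; rewrite eqn_leq; apply/andP; split.
  exact: mxrank_le_left_kernel casimir_exps_wmx casimir_exps_sectionK.
exact: leq_trans (mxrank_ge_left_inverse minor_invK) (mxrank_colsub_le _ _).
Qed.

End LogCanonicalBracket.

Theorem mainTheorem5 (R : numFieldType) :
  casimir (lmul (lgen R (inord 3)) (lgen R (inord 4))) /\
  casimir (lmul (lgen R (inord 7)) (lgen R (inord 6))) /\
  (forall x : 'I_8 -> R, (forall i, x i != 0) -> leaf_dim x = 6%N).
Proof.
split; first exact/casimir_lmul_lgen/wcoef_de.
split; first exact/casimir_lmul_lgen/wcoef_hg.
by move=> x x_nz; rewrite leaf_dimE // rank_wmx.
Qed.
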